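(* Let $H$ be a graph, $K$ a clique of $H$, and $x$ a vertex of $H$ not in $K$ that is adjacent to all vertices of $K$, such that all vertices of $K$ have the same closed neighborhood in $H-x$. For $0\le i\le |K|$, let $H_i$ be the graph obtained from $H$ by removing $i$ of the edges between $x$ and $K$. Then \[ (i-j)X_{H_k}+(j-k)X_{H_i}+(k-i)X_{H_j}=0\qquad\text{for any } 0\le i\le j\le k\le |K|. \]
   Context: All graphs are finite simple graphs. The chromatic symmetric function of a graph $G$ is $X_G=\sum_{\kappa}\prod_{v\in V(G)}x_{\kappa(v)}$, where $\kappa$ ranges over proper colorings $\kappa:V(G)\to\{1,2,\dots\}$. A clique is a set of pairwise adjacent vertices. The closed neighborhood of a vertex is the set consisting of the vertex and all vertices adjacent to it. *)

From HB Require Import structures.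
From mathcomp Require Import all_boot all_algebra.
From mathcomp Require Import mpoly.
Set Implicit Arguments. Unset Strict Implicit. Unset Printing Implicit Defensive.
Import GRing.Theory.
Local Open Scope ring_scope.

(* A finite simple graph: vertex type T : finType, edge relation e : rel T,
   required to be symmetric and irreflexive (hypotheses of the theorem). *)

Definition proper_col (T : finType) (e : rel T) (n : nat) (k : {ffun T -> 'I_n}) : bool :=
  [forall u, forall v, e u v ==> (k u != k v)].

(* The chromatic symmetric function X_G truncated to the variables x_1..x_n,
   i.e. X_G(x_1,...,x_n,0,0,...) : the sum over proper colourings
   kappa : V -> {1..n} of prod_v x_{kappa v}.  Two symmetric functions are
   equal iff all these truncations are equal. *)
Definition csf (T : finType) (e : rel T) (n : nat) : {mpoly int[n]} :=
  \sum_(k : {ffun T -> 'I_n} | proper_col e k) \prod_(v : T) 'X_(k v).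

Definition remove_edges (T : finType) (e : rel T) (x : T) (S : {set T}) : rel T :=
  fun u v => e u v && ~~ (((u == x) && (v \in S)) || ((v == x) && (u \in S))).

From HB Require Import structures.
From mathcomp Require Import all_boot all_algebra.
From mathcomp Require Import mpoly.
From mathcomp Require Import fingroup perm ring.
Import GRing.Theory.
Local Open Scope ring_scope.

(* Let G0 be H with every edge between x and K removed; H_S removes only the
   edges between x and S.  A colouring is proper for H_S iff it is proper for
   G0 and no vertex of K \ S has the colour of x.  K is still a clique in G0,
   so at most one vertex of K has the colour of x, whence
   X_{H_S} = A + sum_{v in S} B_v, with A counting the G0-colourings in which
   the colour of x is absent from K and B_v those with kappa(v) = kappa(x).
   The vertices of K are twins in G0, so transposing two of them is an
   automorphism of G0 and all B_v are equal.  Thus X_{H_S} = A + |S| B is an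
   affine function of |S|, and any three values of an affine function satisfy
   the stated linear relation. *)

Lemma affine_three_term_eq0 (R : comPzRingType) (V : lmodType R) (A B : V) (i j k : R) :
  (i - j) *: (A + k *: B) + (j - k) *: (A + i *: B) + (k - i) *: (A + j *: B) = 0.
Proof.
rewrite !scalerDr !scalerA (addrACA ((i - j) *: A)).
rewrite (addrACA ((i - j) *: A + (j - k) *: A)) -!scalerDl.
have -> : i - j + (j - k) + (k - i) = 0 by ring.
have -> : (i - j) * k + (j - k) * i + (k - i) * j = 0 by ring.
by rewrite !scale0r addr0.
Qed.

Lemma forall_neq_setD (T : finType) (C : eqType) (f : T -> C) (c : C) (K S : {set T}) :
  {in K &, injective f} -> S \subset K ->
  [forall v in K :\: S, f v != c] =
  ([forall v in K, f v != c] + \sum_(v in S) (f v == c))%N :> nat.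
Proof.
move=> f_inj sSK.
have [v0 /andP[v0K /eqP fv0] | noc] := pickP [pred v in K | f v == c].
- have fiber : forall v, v \in K -> (f v == c) = (v == v0).
    by move=> v vK; apply/eqP/eqP => [fv | ->//]; apply: f_inj; rewrite ?fv.
  have -> : [forall v in K, f v != c] = false.
    by apply/forallP => /(_ v0); rewrite v0K fv0 eqxx.
  have -> : [forall v in K :\: S, f v != c] = (v0 \in S).
    apply/forallP/idP => [/(_ v0) | v0S v].
      by rewrite inE v0K fv0 eqxx andbT /= implybF negbK.
    by apply/implyP; rewrite inE => /andP[vS /fiber->]; apply: contraNneq vS => ->.
  rewrite /= add0n (eq_bigr (fun v => nat_of_bool (v == v0)));
    last by move=> v /(subsetP sSK)/fiber->.
  have [v0S | v0S] := boolP (v0 \in S).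
  + by rewrite (bigD1 v0) //= eqxx big1 // => v /andP[_ /negbTE->].
  + by rewrite big1 // => v vS; apply/eqP; rewrite eqb0; apply: contraNneq v0S => <-.
- have avoid v : v \in K -> f v != c by move=> vK; move: (noc v); rewrite /= vK => /negbT.
  have -> : [forall v in K, f v != c] by apply/forall_inP.
  have -> : [forall v in K :\: S, f v != c].
    by apply/forall_inP => v; rewrite inE => /andP[_ /avoid].
  by rewrite big1 // => v /(subsetP sSK)/avoid/negbTE->.
Qed.

Lemma tperm_aut_of_closed_nbhd {T : finType} {f : rel T} (u v : T) :
  (forall a b, f a b = f b a) -> irreflexive f ->
  (forall w, (w == u) || f u w = (w == v) || f v w) ->
  forall a b, f (tperm u v a) (tperm u v b) = f a b.
Proof.
move=> f_sym f_irr same.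
have twin w : w != u -> w != v -> f u w = f v w.
  by move=> /negbTE wu /negbTE wv; have := same w; rewrite wu wv.
move=> a b; case: (tpermP u v a) => [-> | -> | /eqP au /eqP av];
  case: (tpermP u v b) => [-> | -> | /eqP bu /eqP bv]; rewrite ?f_irr 1?f_sym //.
- by rewrite f_sym twin.
- by rewrite f_sym twin.
- by rewrite [RHS]f_sym twin.
- by rewrite [RHS]f_sym twin.
Qed.

Lemma remove_edges_sym {T : finType} {e : rel T} (x : T) (S : {set T}) :
  (forall a b, e a b = e b a) ->
  forall a b, remove_edges e x S a b = remove_edges e x S b a.
Proof. by move=> e_sym a b; rewrite /remove_edges e_sym orbC. Qed.

Lemma remove_edges_irr {T : finType} {e : rel T} (x : T) (S : {set T}) :
  irreflexive e -> irreflexive (remove_edges e x S).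
Proof. by move=> e_irr a; rewrite /remove_edges e_irr. Qed.

Definition csf_restr {T : finType} (e : rel T) (n : nat) (P : pred {ffun T -> 'I_n}) :
    {mpoly int[n]} :=
  \sum_(k : {ffun T -> 'I_n} | proper_col e k && P k) \prod_(v : T) 'X_(k v).

Section GraphAutomorphism.

Context {T : finType} {e : rel T} {s : {perm T}}.
Hypothesis s_aut : forall a b, e (s a) (s b) = e a b.

Lemma proper_col_perm n (k : {ffun T -> 'I_n}) :
  proper_col e [ffun w => k (s w)] = proper_col e k.
Proof.
apply/forallP/forallP => proper a; apply/forallP => b; apply/implyP => eab.
- have /implyP := forallP (proper (s^-1 a)%g) (s^-1 b)%g.
  by rewrite -s_aut !ffunE !permKV; apply.
- by rewrite !ffunE; apply: (implyP (forallP (proper (s a)) (s b))); rewrite s_aut.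
Qed.

Lemma csf_restr_perm n (P : pred {ffun T -> 'I_n}) :
  csf_restr e n P = csf_restr e n (fun k => P [ffun w => k (s w)]).
Proof.
have precomp_inj : injective (fun k : {ffun T -> 'I_n} => [ffun w => k (s w)]).
  move=> k1 k2 /ffunP k12; apply/ffunP => w.
  by have := k12 (s^-1 w)%g; rewrite !ffunE permKV.
rewrite /csf_restr (reindex_inj precomp_inj) /=.
apply: eq_big => [k | k _]; first by rewrite proper_col_perm.
by rewrite [RHS](reindex_inj (@perm_inj _ s)); apply: eq_bigr => w _; rewrite ffunE.
Qed.

End GraphAutomorphism.

Section TwinClique.

Context {T : finType} {e : rel T} {x : T} {K : {set T}}.
Hypothesis e_sym : forall u v, e u v = e v u.
Hypothesis e_irr : irreflexive e.
Hypothesis K_clique : forall u v, u \in K -> v \in K -> u != v -> e u v.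
Hypothesis xK : x \notin K.
Hypothesis x_adj : forall v, v \in K -> e x v.
Hypothesis K_nbhd : forall u v, u \in K -> v \in K ->
  forall w, w != x -> ((w == u) || e u w) = ((w == v) || e v w).

Local Notation G0 := (remove_edges e x K).

Lemma memK_neq_x {v} : v \in K -> v != x.
Proof. by apply: contraTneq => ->. Qed.

Lemma proper_col_remove_edges n (S : {set T}) (k : {ffun T -> 'I_n}) :
  S \subset K ->
  proper_col (remove_edges e x S) k =
  proper_col G0 k && [forall v in K :\: S, k v != k x].
Proof.
move=> sSK; rewrite /proper_col /remove_edges; apply/idP/andP.
- move=> /forallP proper; split.
  + apply/forallP=> a; apply/forallP=> b; apply/implyP=> /andP[eab kept].
    apply: (implyP (forallP (proper a) b)); rewrite eab /=.
    by apply: contra kept => /orP[] /andP[-> /(subsetP sSK) ->]; rewrite ?orbT.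
  + apply/forall_inP => v; rewrite inE => /andP[vS vK].
    have /implyP := forallP (proper x) v.
    by rewrite eqxx (negbTE vS) (negbTE (memK_neq_x vK)) x_adj //= eq_sym; apply.
- case=> /forallP proper0 /forall_inP avoid; apply/forallP=> a; apply/forallP=> b.
  apply/implyP=> /andP[eab kept].
  have [/orP[] /andP[/eqP ax bK] | xK_edge] :=
    boolP ((a == x) && (b \in K) || (b == x) && (a \in K)).
  + subst a; have bS : b \notin S by apply: contra kept => bS; rewrite eqxx bS.
    by rewrite eq_sym avoid // inE bS bK.
  + subst b; have aS : a \notin S by apply: contra kept => aS; rewrite eqxx aS orbT.
    by rewrite avoid // inE aS bK.
  + by apply: (implyP (forallP (proper0 a) b)); rewrite eab xK_edge.
Qed.

Lemma proper_col_injective_on_K n (k : {ffun T -> 'I_n}) :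
  proper_col G0 k -> {in K &, injective k}.
Proof.
move=> /forallP proper u v uK vK kuv; apply/eqP/negPn/negP => uv.
have /negP[] : k u != k v.
  apply: (implyP (forallP (proper u) v)).
  by rewrite /remove_edges K_clique // (negbTE (memK_neq_x uK)) (negbTE (memK_neq_x vK)).
by rewrite kuv.
Qed.

Lemma csf_remove_edges_sum n (S : {set T}) :
  S \subset K ->
  csf (remove_edges e x S) n =
  csf_restr G0 n (fun k => [forall v in K, k v != k x])
  + \sum_(v in S) csf_restr G0 n (fun k => k v == k x).
Proof.
move=> sSK; rewrite /csf (eq_bigl _ _ (proper_col_remove_edges n S ^~ sSK)).
rewrite big_mkcondr /csf_restr /= [in RHS]big_mkcondr.
under [X in _ + X]eq_bigr do rewrite big_mkcondr.
rewrite [X in _ + X]exchange_big -big_split /=.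
apply: eq_bigr => k /proper_col_injective_on_K k_inj.
under [X in _ + X]eq_bigr do rewrite -mulrb.
by rewrite -!mulrb sumrMnr -mulrnDr forall_neq_setD.
Qed.

Lemma closed_nbhd_remove_edges {u v} : u \in K -> v \in K ->
  forall w, (w == u) || G0 u w = (w == v) || G0 v w.
Proof.
move=> uK vK w; rewrite /remove_edges.
have [-> | wx] := eqVneq w x.
  rewrite uK vK /= !orbT !andbF !(eq_sym x).
  by rewrite (negbTE (memK_neq_x uK)) (negbTE (memK_neq_x vK)).
by rewrite (negbTE (memK_neq_x uK)) (negbTE (memK_neq_x vK)) /= !andbT (K_nbhd _ _ uK vK).
Qed.

Lemma csf_restr_twin n {u v} : u \in K -> v \in K ->
  csf_restr G0 n (fun k => k u == k x) = csf_restr G0 n (fun k => k v == k x).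
Proof.
move=> uK vK.
have G0_aut := tperm_aut_of_closed_nbhd v u (remove_edges_sym x K e_sym)
  (remove_edges_irr x K e_irr) (closed_nbhd_remove_edges vK uK).
rewrite (csf_restr_perm G0_aut); apply: eq_bigl => k.
by rewrite !ffunE tpermR tpermD ?memK_neq_x.
Qed.

Lemma csf_remove_edges_affine n : exists A B, forall S : {set T}, S \subset K ->
  csf (remove_edges e x S) n = A + #|S|%:Z *: B.
Proof.
have [K0 | [u uK]] := set_0Vmem K.
  exists (csf (remove_edges e x set0) n), 0 => S.
  by rewrite K0 subset0 => /eqP->; rewrite scaler0 addr0.
exists (csf_restr G0 n (fun k => [forall v in K, k v != k x])).
exists (csf_restr G0 n (fun k => k u == k x)) => S sSK.
rewrite csf_remove_edges_sum //.
rewrite (eq_bigr _ (fun v vS => csf_restr_twin n (subsetP sSK v vS) uK)).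
by rewrite sumr_const -scaler_nat natz.
Qed.

End TwinClique.

Theorem corollary2p4 (T : finType) (e : rel T)
  (e_sym : forall u v, e u v = e v u) (e_irr : irreflexive e)
  (K : {set T}) (x : T)
  (K_clique : forall u v, u \in K -> v \in K -> u != v -> e u v)
  (xK : x \notin K)
  (x_adj : forall v, v \in K -> e x v)
  (K_nbhd : forall u v, u \in K -> v \in K ->
     forall w, w != x -> ((w == u) || e u w) = ((w == v) || e v w))
  (i j k : nat) (hij : (i <= j)%N) (hjk : (j <= k)%N) (hk : (k <= #|K|)%N)
  (Si Sj Sk : {set T})
  (hSi : Si \subset K) (hSj : Sj \subset K) (hSk : Sk \subset K)
  (cSi : #|Si| = i) (cSj : #|Sj| = j) (cSk : #|Sk| = k)
  (n : nat) :
  ((i%:Z - j%:Z) *: csf (remove_edges e x Sk) n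
   + (j%:Z - k%:Z) *: csf (remove_edges e x Si) n
   + (k%:Z - i%:Z) *: csf (remove_edges e x Sj) n) = 0.
Proof.
have [A [B affine]] := csf_remove_edges_affine e_sym e_irr K_clique xK x_adj K_nbhd n.
by rewrite !affine // cSi cSj cSk affine_three_term_eq0.
Qed.
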